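(* Let $H$ be a finite subgroup of a group $G$, and suppose that $A\subseteq aH\cup bH$, where $a,b\in G$ are elements with $a^{-1}b\in N(H)$ and $(a^{-1}b)^2\notin H$. If $|A|>\frac95\,|H|$, then $|A^{-1}A|<\frac53\,|A|$; moreover, in this case $A^{-1}A$ is a disjoint union of $H$ and two double $H$-cosets (sets of the form $HgH$, $g\in G$), each of size $|H|$.
   Context: $A^{-1}A=\{a_1^{-1}a_2\colon a_1,a_2\in A\}$. For a subgroup $H\le G$, $N(H)=\{g\in G\colon gH=Hg\}$ denotes its normalizer. *)

(* groups are MathComp's (possibly infinite) [groupType]
   from boot/monoid.v; finite subsets are finmap's [{fset G}]. *)
From HB Require Import structures.
From mathcomp Require Import all_boot monoid.
From mathcomp Require Import finmap.
Set Implicit Arguments. Unset Strict Implicit. Unset Printing Implicit Defensive.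
Local Open Scope fset_scope.

Section Defs.
Variable G : groupType.

Definition is_subgroup (H : {fset G}) : Prop :=
  one \in H /\ (forall x y, x \in H -> y \in H -> mul x y \in H)
  /\ (forall x, x \in H -> inv x \in H).

Definition lcoset (g : G) (H : {fset G}) : {fset G} := [fset mul g h | h in H].
Definition rcoset (H : {fset G}) (g : G) : {fset G} := [fset mul h g | h in H].

Definition in_normalizer (H : {fset G}) (g : G) : Prop := lcoset g H = rcoset H g.

Definition dcoset (H : {fset G}) (g : G) : {fset G} :=
  [fset mul (mul h1 g) h2 | h1 in H, h2 in H].

Definition invprod (A : {fset G}) : {fset G} :=
  [fset mul (inv a1) a2 | a1 in A, a2 in A].
End Defs.

From HB Require Import structures.
From mathcomp Require Import all_boot monoid.
From mathcomp Require Import finmap.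
From mathcomp Require Import zify.
Set Implicit Arguments. Unset Strict Implicit. Unset Printing Implicit Defensive.

(* Put c = a^-1 b.  The bound |A| > 9|H|/5 forces both A_a = A :&: aH and
   A_b = A :&: bH to have more than |H|/2 elements.  For g in cH the sets A_a g
   and A_b both lie in bH (as c normalises H), so they meet and g lies in A^-1 A;
   in the same way H and c^-1 H lie in A^-1 A.  Conversely A^-1 A is covered by
   H, HcH = cH and Hc^-1H = c^-1 H, which are pairwise disjoint because
   c, c^-1 and c^2 are not in H.  Hence |A^-1 A| = 3|H| < 5|A|/3. *)

Local Open Scope group_scope.
Local Open Scope fset_scope.

Section Cosets.
Variable G : groupType.
Implicit Types (A H K X Y : {fset G}) (a b c g x y : G).

Lemma fsetI_neq0_card K X Y :
  X `<=` K -> Y `<=` K -> (#|` K| < #|` X| + #|` Y|)%N -> X `&` Y != fset0.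
Proof.
move=> XK YK ltK; apply/eqP => XY0.
have := cardfsUI X Y; rewrite XY0 cardfs0 addn0 => cardXY.
have /fsubset_leq_card : X `|` Y `<=` K by rewrite fsubUset XK YK.
lia.
Qed.

Lemma cardfsU_disjoint X Y : [disjoint X & Y] -> #|` X `|` Y| = (#|` X| + #|` Y|)%N.
Proof. by move=> dXY; rewrite -cardfsUI disjoint_fsetI0 // cardfs0 addn0. Qed.

Lemma lcosetP H g x : reflect (exists2 h, h \in H & x = g * h) (x \in lcoset g H).
Proof. exact: imfsetP. Qed.

Lemma dcosetP H g x :
  reflect (exists h1 h2, [/\ h1 \in H, h2 \in H & x = h1 * g * h2]) (x \in dcoset H g).
Proof.
apply: (iffP (imfset2P _ _ _ _ _)) => [[h1 h1H [h2 h2H ->]]|[h1 [h2 [h1H h2H ->]]]].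
  by exists h1, h2.
by exists h1 => //; exists h2.
Qed.

Lemma invprodP A x :
  reflect (exists u v, [/\ u \in A, v \in A & x = u^-1 * v]) (x \in invprod A).
Proof.
apply: (iffP (imfset2P _ _ _ _ _)) => [[u uA [v vA ->]]|[u [v [uA vA ->]]]].
  by exists u, v.
by exists u => //; exists v.
Qed.

Lemma card_lcoset H g : #|` lcoset g H| = #|` H|.
Proof. by rewrite card_imfset //=; apply: mulgI. Qed.

Lemma invprodS A B : A `<=` B -> invprod A `<=` invprod B.
Proof.
move=> AB; apply/fsubsetP => x /invprodP [u [v [uA vA ->]]].
by apply/invprodP; exists u, v; split=> //; apply: (fsubsetP AB).
Qed.

Lemma mem_invprod_translate A K X Y g :
  X `<=` A -> Y `<=` A -> Y `<=` K -> (forall x, x \in X -> x * g \in K) ->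
  (#|` K| < #|` X| + #|` Y|)%N -> g \in invprod A.
Proof.
move=> XA YA YK XgK ltK.
have XgK' : [fset x * g | x in X] `<=` K.
  by apply/fsubsetP => _ /imfsetP [x /= xX ->]; apply: XgK.
have ltK' : (#|` K| < #|` [fset (x * g)%g | x in X]| + #|` Y|)%N.
  by rewrite card_imfset //=; apply: mulIg.
have /fset0Pn [_ /fsetIP [/imfsetP [x /= xX ->] xgY]] := fsetI_neq0_card XgK' YK ltK'.
apply/invprodP; exists x, (x * g); split; last by rewrite mulKg.
  exact: (fsubsetP XA).
exact: (fsubsetP YA).
Qed.

Lemma card_fsetI_lcoset H A a b :
  A `<=` lcoset a H `|` lcoset b H -> (3 * #|` H| < 2 * #|` A|)%N ->
  (#|` H| < 2 * #|` A `&` lcoset a H|)%N.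
Proof.
move=> sA ltA.
have /fsubset_leq_card : A `<=` (A `&` lcoset a H) `|` (A `&` lcoset b H).
  by rewrite -fsetIUr fsubsetI fsubset_refl.
have := cardfsUI (A `&` lcoset a H) (A `&` lcoset b H).
have /fsubset_leq_card : A `&` lcoset b H `<=` lcoset b H by apply: fsubsetIr.
rewrite card_lcoset; lia.
Qed.

Lemma normalizer_commL H c h :
  in_normalizer H c -> h \in H -> exists2 y, y \in H & h * c = c * y.
Proof.
move=> nHc hH; have : h * c \in rcoset H c by apply/imfsetP; exists h.
by rewrite -nHc => /lcosetP [y yH ->]; exists y.
Qed.

Lemma normalizer_commR H c h :
  in_normalizer H c -> h \in H -> exists2 y, y \in H & c * h = y * c.
Proof.
move=> nHc hH; have : c * h \in lcoset c H by apply/lcosetP; exists h.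
by rewrite nHc => /imfsetP [y yH ->]; exists y.
Qed.

Lemma in_normalizer1 H : in_normalizer H 1.
Proof.
apply/fsetP => x; apply/imfsetP/imfsetP => -[h hH ->] /=;
  by exists h; rewrite ?mul1g ?mulg1.
Qed.

Lemma in_normalizerV H c : in_normalizer H c -> in_normalizer H c^-1.
Proof.
move=> nHc; apply/fsetP => x; apply/imfsetP/imfsetP => -[h hH ->] /=.
  have [y yH e] := normalizer_commL nHc hH.
  by exists y => //; rewrite -[LHS](mulgK c) -(mulgA c^-1 h) e mulKg.
have [y yH e] := normalizer_commR nHc hH.
by exists y => //; rewrite -[LHS](mulKg c) (mulgA c h) e mulgK.
Qed.
End Cosets.

Section Subgroup.
Variables (G : groupType) (H : {fset G}).
Hypothesis subH : is_subgroup H.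
Implicit Types (A X Y : {fset G}) (a b c g h x y : G).

Lemma subgroup1 : 1 \in H.
Proof. by case: subH. Qed.

Lemma subgroupM x y : x \in H -> y \in H -> x * y \in H.
Proof. by case: subH => _ [mulH _]; apply: mulH. Qed.

Lemma subgroupV x : x \in H -> x^-1 \in H.
Proof. by case: subH => _ [_ invH]; apply: invH. Qed.

Lemma subgroupVr x : (x^-1 \in H) = (x \in H).
Proof. by apply/idP/idP => /subgroupV //; rewrite invgK. Qed.

Lemma dcoset1 : dcoset H 1 = H.
Proof.
apply/fsetP => x; apply/dcosetP/idP => [[h1 [h2 [h1H h2H ->]]]|xH].
  by rewrite mulg1 subgroupM.
by exists 1, x; rewrite subgroup1 xH mulg1 mul1g.
Qed.

Lemma fdisjoint_dcoset g1 g2 :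
  g2 \notin dcoset H g1 -> [disjoint dcoset H g1 & dcoset H g2].
Proof.
move=> g2n; apply/fdisjointP => _ /dcosetP [h1 [h2 [h1H h2H ->]]].
apply: contra g2n => /dcosetP [h3 [h4 [h3H h4H e]]].
apply/dcosetP; exists (h3^-1 * h1), (h2 * h4^-1); split.
- by rewrite subgroupM ?subgroupV.
- by rewrite subgroupM ?subgroupV.
have -> : h3^-1 * h1 * g1 * (h2 * h4^-1) = h3^-1 * (h1 * g1 * h2) * h4^-1.
  by rewrite !mulgA.
by rewrite e !mulgA mulgK mulVg mul1g.
Qed.

Lemma dcoset_normal c : in_normalizer H c -> dcoset H c = lcoset c H.
Proof.
move=> nHc; apply/fsetP => x; apply/dcosetP/lcosetP => [[h1 [h2 [h1H h2H ->]]]|[h hH ->]].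
  have [y yH ->] := normalizer_commL nHc h1H.
  by exists (y * h2); rewrite ?subgroupM // mulgA.
by exists 1, h; rewrite subgroup1 mul1g.
Qed.

Lemma invg_notin_dcoset c :
  in_normalizer H c -> c * c \notin H -> c^-1 \notin dcoset H c.
Proof.
move=> nHc; rewrite dcoset_normal //; apply: contra => /lcosetP [h hH e].
have -> : c * c = h^-1 by rewrite -(mulgK h (c * c)) -(mulgA c c h) -e mulgV mul1g.
exact: subgroupV.
Qed.

Lemma lcoset_mul a c x y : in_normalizer H c ->
  x \in lcoset a H -> y \in lcoset c H -> x * y \in lcoset (a * c) H.
Proof.
move=> nHc /lcosetP [k kH ->] /lcosetP [h hH ->].
have [k' k'H e] := normalizer_commL nHc kH.
apply/lcosetP; exists (k' * h); first exact: subgroupM.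
by rewrite -mulgA (mulgA k) e !mulgA.
Qed.

Lemma lcoset_invmul g1 g2 u v :
  u \in lcoset g1 H -> v \in lcoset g2 H -> u^-1 * v \in dcoset H (g1^-1 * g2).
Proof.
move=> /lcosetP [k1 k1H ->] /lcosetP [k2 k2H ->].
apply/dcosetP; exists k1^-1, k2; split; rewrite ?subgroupV //.
by rewrite invgM !mulgA.
Qed.

Lemma lcoset_sub_invprod A X Y a c : in_normalizer H c ->
  X `<=` A -> Y `<=` A -> X `<=` lcoset a H -> Y `<=` lcoset (a * c) H ->
  (#|` H| < #|` X| + #|` Y|)%N -> lcoset c H `<=` invprod A.
Proof.
move=> nHc XA YA XaH YacH ltH; apply/fsubsetP => g gcH.
apply: (mem_invprod_translate XA YA YacH); last by rewrite card_lcoset.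
by move=> x /(fsubsetP XaH) xaH; apply: lcoset_mul.
Qed.

Lemma invprod_two_cosets A a b : in_normalizer H (a^-1 * b) ->
  A `<=` lcoset a H `|` lcoset b H ->
  (#|` H| < 2 * #|` A `&` lcoset a H|)%N -> (#|` H| < 2 * #|` A `&` lcoset b H|)%N ->
  invprod A = H `|` dcoset H (a^-1 * b) `|` dcoset H (a^-1 * b)^-1.
Proof.
set c := a^-1 * b => nHc sA ltHa ltHb.
have ebV : b^-1 * a = c^-1 by rewrite /c invgM invgK.
apply/eqP; rewrite eqEfsubset; apply/andP; split.
  apply: fsubset_trans (invprodS sA) _; apply/fsubsetP => _ /invprodP [u [v [uA vA ->]]].
  move: uA vA; rewrite !in_fsetU => /orP[] uH /orP[] vH;
    have := lcoset_invmul uH vH; rewrite -/c ?ebV ?mulVg ?dcoset1 => ->;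
    by rewrite ?orbT.
have AaA := fsubsetIl A (lcoset a H); have AbA := fsubsetIl A (lcoset b H).
rewrite !fsubUset (dcoset_normal nHc) (dcoset_normal (in_normalizerV nHc)).
rewrite -{1}dcoset1 (dcoset_normal (in_normalizer1 H)) -andbA.
apply/and3P; split.
- apply: (lcoset_sub_invprod (a := a) (in_normalizer1 H) AaA AaA); last lia.
    exact: fsubsetIr.
  by rewrite mulg1 fsubsetIr.
- apply: (lcoset_sub_invprod nHc AaA AbA); last lia.
    exact: fsubsetIr.
  by rewrite /c mulVKg fsubsetIr.
- apply: (lcoset_sub_invprod (in_normalizerV nHc) AbA AaA); last lia.
    exact: fsubsetIr.
  by rewrite -ebV mulVKg fsubsetIr.
Qed.

End Subgroup.

Theorem proposition3p1 (G : groupType) (H A : {fset G}) (a b : G) :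
  is_subgroup H ->
  A `<=` lcoset a H `|` lcoset b H ->
  in_normalizer H (mul (inv a) b) ->
  mul (mul (inv a) b) (mul (inv a) b) \notin H ->
  (* |A| > (9/5) |H| *)
  9 * #|` H| < 5 * #|` A| ->
  (* |A^{-1}A| < (5/3) |A| *)
  (3 * #|` invprod A| < 5 * #|` A|)%N /\
  exists g1 g2 : G,
    invprod A = H `|` dcoset H g1 `|` dcoset H g2 /\
    [disjoint H & dcoset H g1] /\ [disjoint H & dcoset H g2] /\
    [disjoint dcoset H g1 & dcoset H g2] /\
    #|` dcoset H g1| = #|` H| /\ #|` dcoset H g2| = #|` H|.
Proof.
move=> subH sA nHc ccH ltA.
have lt3 : (3 * #|` H| < 2 * #|` A|)%N by lia.
have ltHa := card_fsetI_lcoset sA lt3.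
have ltHb : (#|` H| < 2 * #|` A `&` lcoset b H|)%N.
  by apply: (card_fsetI_lcoset (b := a) _ lt3); rewrite fsetUC.
have -> := invprod_two_cosets subH nHc sA ltHa ltHb.
set c := mul (inv a) b in nHc ccH *.
have cH : c \notin H by apply: contra ccH => cH; rewrite subgroupM.
have dH1 : [disjoint H & dcoset H c].
  by rewrite -{1}(dcoset1 subH) fdisjoint_dcoset ?dcoset1.
have dH2 : [disjoint H & dcoset H c^-1].
  by rewrite -{1}(dcoset1 subH) fdisjoint_dcoset ?dcoset1 ?subgroupVr.
have d12 := fdisjoint_dcoset subH (invg_notin_dcoset subH nHc ccH).
have cardc : #|` dcoset H c| = #|` H| by rewrite dcoset_normal ?card_lcoset.
have cardcV : #|` dcoset H c^-1| = #|` H|.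
  by rewrite dcoset_normal ?card_lcoset //; apply: in_normalizerV.
split; last by exists c, c^-1.
by rewrite !cardfsU_disjoint ?fdisjointUX ?dH1 ?dH2 ?d12 // cardc cardcV; lia.
Qed.
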